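(* Assume $k$ algebraically closed. Let $\mathfrak{sp}(W,\omega)=\{D\in\operatorname{End}(W)\mid \omega(Dx,y)+\omega(x,Dy)=0\ \forall x,y\}$, acting on $\operatorname{span}_k\{a\wedge b\}$ by $D(a\wedge b)=(Da)\wedge b+a\wedge(Db)$. Then the product $\odot_2$ (restricted to $\sigma(V)$) is not Lie invariant under $\mathfrak{sp}(W,\omega)$: there exist $D\in\mathfrak{sp}(W,\omega)$ and $u,v\in\sigma(V)$ with $D(u\odot_2 v)\neq D(u)\odot_2 v+u\odot_2 D(v)$. Consequently $\odot_2$ is not invariant under the symplectic group $\operatorname{Sp}(W,\omega)\cong\operatorname{Sp}_{56}$.
   Context: Let $k$ be a field with $\operatorname{char}k=0$ or $\operatorname{char}k>19$. Let $J$ be an Albert algebra over $k$ (a $27$-dimensional central simple exceptional Jordan algebra) with unit $e$, trace bilinear form $\langle\cdot,\cdot\rangle$ and cubic norm $\det$; let $\langle\cdot,\cdot,\cdot\rangle$ be the symmetric trilinear form with $\langle x,x,x\rangle=\det x$, and define the cross product $x\times y\in J$ by $\langle x\times y,z\rangle=3\langle x,y,z\rangle$ for all $z\in J$. The Brown algebra $W=\mathcal B(k,J)$ is the vector space $k\oplus J\oplus J\oplus k$, whose elements are written $\begin{pmatrix}\alpha&j\\ j'&\beta\end{pmatrix}$, with multiplication $\begin{pmatrix}\alpha_1&j_1\\ j_1'&\beta_1\end{pmatrix}\begin{pmatrix}\alpha_2&j_2\\ j_2'&\beta_2\end{pmatrix}=\begin{pmatrix}\alpha_1\alpha_2+\langle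 j_1,j_2'\rangle&\alpha_1j_2+\beta_2j_1+2j_1'\times j_2'\\ \alpha_2j_1'+\beta_1j_2'+2j_1\times j_2&\beta_1\beta_2+\langle j_2,j_1'\rangle\end{pmatrix}$ and involution $x\mapsto\bar x$ swapping $\alpha$ and $\beta$. Put $\{x,y,z\}=(x\bar y)z+(z\bar y)x-(z\bar x)y$ and $s_0=\begin{pmatrix}1&0\\0&-1\end{pmatrix}$. The symplectic form $\omega$ on $W$ is defined by $\omega(x,y)1_W=(x\bar y-y\bar x)s_0$; explicitly $\omega\big((\alpha_1,j_1,j_1',\beta_1),(\alpha_2,j_2,j_2',\beta_2)\big)=\alpha_1\beta_2-\alpha_2\beta_1+\langle j_1,j_2'\rangle-\langle j_1',j_2\rangle$. The triple product is $t(x,y,z)=2\{x,s_0y,z\}-\omega(y,z)x-\omega(y,x)z-\omega(x,z)y$. For $x,y\in W$ let $x\wedge y\in\operatorname{End}(W)$ be $a\mapsto\omega(x,a)y-\omega(y,a)x$, and $L_{x,y}\in\operatorname{End}(W)$ be $a\mapsto t(x,y,a)$. Define $f'(a\wedge b,c\wedge d)=\omega(a,c)\omega(b,d)-\omega(a,d)\omega(b,c)$, extended bilinearly. $\sigma(V)=\{\sum_i a_i\wedge b_i\mid\sum_i\omega(a_i,b_i)=0\}$. The product $\odot_2$ on $\operatorname{span}_k\{a\wedge b\mid a,b\in W\}$ is $a\wedge b\odot_2 c\wedge d=L_{a,c}\bullet L_{b,d}-L_{a,d}\bullet L_{b,c}+\frac{11}{28}f'(a\wedge b,c\wedge d)\mathrm{id}_W$,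 with $F\bullet H=\frac12(FH+HF)$; it maps $\sigma(V)\times\sigma(V)$ into $\sigma(V)$. *)

From mathcomp Require Import all_boot all_algebra.
Set Implicit Arguments. Unset Strict Implicit. Unset Printing Implicit Defensive.
Import GRing.Theory.
Local Open Scope ring_scope.

(* Split Albert algebra over k (the unique Albert algebra when k is
   algebraically closed), realised as the first Tits construction
   J = M_3(k) x M_3(k) x M_3(k), element ((a0, a1), a2), with generic
   trace bilinear form and cubic norm
     <x,y>  = tr(a0 b0) + tr(a1 b2) + tr(a2 b1)
     det x  = det a0 + det a1 + det a2 - tr(a0 a1 a2). *)
Notation Alb k := ('M[k]_3 * 'M[k]_3 * 'M[k]_3)%type.

Section Defs.
Variable k : fieldType.

Definition alb_tr (x y : Alb k) : k :=
  \tr (x.1.1 *m y.1.1) + \tr (x.1.2 *m y.2) + \tr (x.2 *m y.1.2).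

Definition alb_det (x : Alb k) : k :=
  \det x.1.1 + \det x.1.2 + \det x.2 - \tr (x.1.1 *m x.1.2 *m x.2).

(* symmetric trilinear form with <x,x,x> = det x (polarisation; char k <> 2,3) *)
Definition alb_tri (x y z : Alb k) : k :=
  (alb_det (x + y + z) - alb_det (x + y) - alb_det (x + z) - alb_det (y + z)
   + alb_det x + alb_det y + alb_det z) / 6%:R.

Definition is_cross (cr : Alb k -> Alb k -> Alb k) : Prop :=
  forall x y z, alb_tr (cr x y) z = 3%:R * alb_tri x y z.

(* Brown algebra W = k + J + J + k, element (((alpha, j), j'), beta) *)
Notation W := (k^o * Alb k * Alb k * k^o)%type.

Definition bα (x : W) : k := x.1.1.1.
Definition bj (x : W) : Alb k := x.1.1.2.
Definition bj' (x : W) : Alb k := x.1.2.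
Definition bβ (x : W) : k := x.2.
Definition mkW (a : k) (j j' : Alb k) (b : k) : W := (((a : k^o), j, j'), (b : k^o)).

Variable cr : Alb k -> Alb k -> Alb k.

Definition brown_mul (x y : W) : W :=
  mkW (bα x * bα y + alb_tr (bj x) (bj' y))
      (bα x *: bj y + bβ y *: bj x + 2%:R *: cr (bj' x) (bj' y))
      (bα y *: bj' x + bβ x *: bj' y + 2%:R *: cr (bj x) (bj y))
      (bβ x * bβ y + alb_tr (bj y) (bj' x)).

Definition brown_bar (x : W) : W := mkW (bβ x) (bj x) (bj' x) (bα x).

Definition brown_trip (x y z : W) : W :=
  brown_mul (brown_mul x (brown_bar y)) z + brown_mul (brown_mul z (brown_bar y)) x
  - brown_mul (brown_mul z (brown_bar x)) y.

Definition s0 : W := mkW 1 0 0 (-1).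

Definition omega (x y : W) : k :=
  bα x * bβ y - bα y * bβ x + alb_tr (bj x) (bj' y) - alb_tr (bj' x) (bj y).

Definition tprod (x y z : W) : W :=
  2%:R *: brown_trip x (brown_mul s0 y) z
  - omega y z *: x - omega y x *: z - omega x z *: y.

Definition wedge (x y : W) : W -> W := fun a => omega x a *: y - omega y a *: x.

Definition Lop (x y : W) : W -> W := fun a => tprod x y a.

Definition jprod (F H : W -> W) : W -> W := fun a => 2%:R^-1 *: (F (H a) + H (F a)).

Definition fprime (p q : W * W) : k :=
  omega p.1 q.1 * omega p.2 q.2 - omega p.1 q.2 * omega p.2 q.1.

Definition odot_pair (p q : W * W) : W -> W := fun a =>
  jprod (Lop p.1 q.1) (Lop p.2 q.2) a - jprod (Lop p.1 q.2) (Lop p.2 q.1) a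
  + (11%:R / 28%:R * fprime p q) *: a.

(* Elements of span{a /\ b} are given by formal sums (lists of pairs). *)
Definition wsum (u : seq (W * W)) : W -> W :=
  fun a => \sum_(p <- u) wedge p.1 p.2 a.

Definition odot2 (u v : seq (W * W)) : W -> W :=
  fun a => \sum_(p <- u) \sum_(q <- v) odot_pair p q a.

Definition in_sigma (u : seq (W * W)) : Prop := \sum_(p <- u) omega p.1 p.2 = 0.

Definition is_linW (D : W -> W) : Prop :=
  forall (c : k) (x y : W), D (c *: x + y) = c *: D x + D y.

Definition is_sp (D : W -> W) : Prop :=
  is_linW D /\ forall x y, omega (D x) y + omega x (D y) = 0.

Definition is_Sp (g : W -> W) : Prop :=
  is_linW g /\ bijective g /\ forall x y, omega (g x) (g y) = omega x y.

Definition Dact (D : W -> W) (u : seq (W * W)) : seq (W * W) :=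
  [seq (D p.1, p.2) | p <- u] ++ [seq (p.1, D p.2) | p <- u].

Definition gact (g : W -> W) (u : seq (W * W)) : seq (W * W) :=
  [seq (g p.1, g p.2) | p <- u].

End Defs.

Notation Brown k := (k^o * Alb k * Alb k * k^o)%type.

(* Write wE a b c d for the element (a, b E11, c E11, d) of the Brown algebra, where
   E11 is a matrix unit in the first factor of the split Albert algebra, and e1, ..., e4
   for wE 1 0 0 0, ..., wE 0 0 0 1.  The cubic norm is affine along E11, so
   E11 x E11 = 0 and the span of e1, ..., e4 is closed under the triple product t, on
   which t is an explicit cubic polynomial map.  Take u = e2 /\ e4 and v = e3 /\ e4;
   computing L_{x,y} on all of W for the four pairs (x, y) that occur shows that
   u odot_2 v = 0.  The square-zero map D : x |-> beta(x) e1 lies in sp(W, omega), hence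
   annihilates u odot_2 v, whereas the alpha-coordinate of (Du odot_2 v + u odot_2 Dv)(e1)
   is -4.  The transvection 1 + D lies in Sp(W, omega) and fixes e1, so the same
   evaluation refutes invariance under it. *)
From mathcomp Require Import all_boot all_algebra.
From mathcomp Require Import ring.
Import GRing.Theory.
Local Open Scope ring_scope.
Set Implicit Arguments. Unset Strict Implicit.

Section Matrix3.
Variable R : comNzRingType.

Definition i0 : 'I_3 := @Ordinal 3 0 isT.
Definition i1 : 'I_3 := @Ordinal 3 1 isT.
Definition i2 : 'I_3 := @Ordinal 3 2 isT.

Lemma sum_ord3 (F : 'I_3 -> R) : \sum_i F i = F i0 + F i1 + F i2.
Proof.
by rewrite !big_ord_recr big_ord0 /= add0r; congr (F _ + F _ + F _); apply: val_inj.
Qed.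

Lemma mxtrace3 (A : 'M[R]_3) : \tr A = A i0 i0 + A i1 i1 + A i2 i2.
Proof. exact: sum_ord3. Qed.

Lemma mulmx3E (A B : 'M[R]_3) i j :
  (A *m B) i j = A i i0 * B i0 j + A i i1 * B i1 j + A i i2 * B i2 j.
Proof. by rewrite mxE sum_ord3. Qed.

Lemma det_mx33 (A : 'M[R]_3) : \det A =
  A i0 i0 * (A i1 i1 * A i2 i2 - A i1 i2 * A i2 i1)
  - A i0 i1 * (A i1 i0 * A i2 i2 - A i1 i2 * A i2 i0)
  + A i0 i2 * (A i1 i0 * A i2 i1 - A i1 i1 * A i2 i0).
Proof.
rewrite (expand_det_row _ i0) sum_ord3 /cofactor !(expand_det_row _ ord0).
rewrite !big_ord_recr !big_ord0 /= !add0r /cofactor !det_mx11 !mxE.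
pose B (m n : nat) := A (inord m) (inord n).
have toB x y : A x y = B x y by rewrite /B !inord_val.
by rewrite !toB /= /bump /=; ring.
Qed.

Lemma mxtrace_mul_delta n (A : 'M[R]_n) i j : \tr (A *m delta_mx i j) = A j i.
Proof.
rewrite /mxtrace (bigD1 j) //= big1 ?addr0 => [|l /negPf nlj]; rewrite mxE.
  rewrite (bigD1 i) //= big1 ?addr0 => [|m /negPf nmi]; rewrite mxE ?nmi ?mulr0 //.
  by rewrite !eqxx mulr1.
by rewrite big1 // => m _; rewrite mxE nlj andbF mulr0.
Qed.

End Matrix3.

Section Albert.
Variable k : fieldType.
Implicit Types (X Y Z : Alb k) (a : k).

Definition E11 : Alb k := (delta_mx i0 i0, 0, 0).

Lemma alb_matrixP X Y :
  (forall i j, X.1.1 i j = Y.1.1 i j) -> (forall i j, X.1.2 i j = Y.1.2 i j) ->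
  (forall i j, X.2 i j = Y.2 i j) -> X = Y.
Proof.
by case: X Y => [[X0 X1] X2] [[Y0 Y1] Y2] /= /matrixP-> /matrixP-> /matrixP->.
Qed.

Lemma alb_tr0l Y : alb_tr 0 Y = 0.
Proof. by rewrite /alb_tr /= !mul0mx !mxtrace0 !addr0. Qed.

Lemma alb_tr0r X : alb_tr X 0 = 0.
Proof. by rewrite /alb_tr /= !mulmx0 !mxtrace0 !addr0. Qed.

Lemma alb_trDl X Y Z : alb_tr (X + Y) Z = alb_tr X Z + alb_tr Y Z.
Proof. by rewrite /alb_tr /= !mulmxDl !mxtraceD; ring. Qed.

Lemma alb_trDr X Y Z : alb_tr X (Y + Z) = alb_tr X Y + alb_tr X Z.
Proof. by rewrite /alb_tr /= !mulmxDr !mxtraceD; ring. Qed.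

Lemma alb_tr_E11 a1 a2 : alb_tr (a1 *: E11) (a2 *: E11) = a1 * a2.
Proof.
rewrite /alb_tr /= !scaler0 !mul0mx !mxtrace0 -scalemxAl -scalemxAr.
by rewrite !mxtraceZ mxtrace_mul_delta mxE !addr0 mulr1.
Qed.

Lemma alb_tr_eq0 X : (forall Z, alb_tr X Z = 0) -> X = 0.
Proof.
case: X => [[X0 X1] X2] trX0.
have [-> -> ->] : [/\ X0 = 0, X1 = 0 & X2 = 0] => //.
split; apply/matrixP => i j.
- by have := trX0 (delta_mx j i, 0, 0); rewrite /alb_tr /= !mulmx0 !mxtrace0
    !addr0 mxtrace_mul_delta mxE.
- by have := trX0 (0, 0, delta_mx j i); rewrite /alb_tr /= !mulmx0 !mxtrace0
    addr0 add0r mxtrace_mul_delta mxE.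
- by have := trX0 (0, delta_mx j i, 0); rewrite /alb_tr /= !mulmx0 !mxtrace0
    !add0r mxtrace_mul_delta mxE.
Qed.

Lemma alb_det0 : alb_det (0 : Alb k) = 0.
Proof. by rewrite /alb_det /= det0 !mul0mx mxtrace0 !addr0 subr0. Qed.

Lemma alb_det_E11 a : alb_det (a *: E11) = 0.
Proof. by rewrite /alb_det /= !scaler0 det0 !mulmx0 mxtrace0 det_mx33 !mxE /=; ring. Qed.

Lemma alb_det_addE11 a Z : alb_det (a *: E11 + Z) = alb_det Z +
  a * (Z.1.1 i1 i1 * Z.1.1 i2 i2 - Z.1.1 i1 i2 * Z.1.1 i2 i1 - (Z.1.2 *m Z.2) i0 i0).
Proof.
case: Z => [[Z0 Z1] Z2]; rewrite /alb_det /= !scaler0 !add0r !det_mx33 !mxtrace3.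
by rewrite !mulmx3E !mxE /=; ring.
Qed.

(* the polarisation of a function that is affine along E11 vanishes on E11 x E11 *)
Lemma alb_tri_E11 a1 a2 Z : alb_tri (a1 *: E11) (a2 *: E11) Z = 0.
Proof. by rewrite /alb_tri -!scalerDl !alb_det_addE11 !alb_det_E11; ring. Qed.

Lemma alb_tri0l Y Z : alb_tri 0 Y Z = 0.
Proof. by rewrite /alb_tri !add0r alb_det0; ring. Qed.

Lemma alb_tri0m X Z : alb_tri X 0 Z = 0.
Proof. by rewrite /alb_tri !addr0 add0r alb_det0; ring. Qed.

Variable cr : Alb k -> Alb k -> Alb k.
Hypothesis hcr : is_cross cr.

Lemma cross_eq0 X Y : (forall Z, alb_tri X Y Z = 0) -> cr X Y = 0.
Proof. by move=> tri0; apply: alb_tr_eq0 => Z; rewrite hcr tri0 mulr0. Qed.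

Lemma cross0l Y : cr 0 Y = 0.
Proof. exact/cross_eq0/alb_tri0l. Qed.

Lemma cross0r X : cr X 0 = 0.
Proof. exact/cross_eq0/alb_tri0m. Qed.

Lemma cross_E11 a1 a2 : cr (a1 *: E11) (a2 *: E11) = 0.
Proof. exact/cross_eq0/alb_tri_E11. Qed.

End Albert.
Arguments E11 {k}.

(* brown is mkW behind a lock, so that simplification never unfolds it into tuples *)
Fact brown_key : unit. Proof. exact: tt. Qed.
Definition brown {k : fieldType} (a : k) (j j' : Alb k) (b : k) : Brown k :=
  locked_with brown_key (mkW a j j' b).

Section BrownCoordinates.
Variable k : fieldType.
Implicit Types (a b c : k) (j : Alb k) (x y z : Brown k).

Lemma brownE a j j' b : brown a j j' b = mkW a j j' b.
Proof. by rewrite /brown unlock. Qed.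

Lemma brown_eta x : x = brown (bα x) (bj x) (bj' x) (bβ x).
Proof. by rewrite brownE; case: x => [[[]]]. Qed.

Lemma bα_brown a j j' b : bα (brown a j j' b) = a. Proof. by rewrite brownE. Qed.
Lemma bj_brown a j j' b : bj (brown a j j' b) = j. Proof. by rewrite brownE. Qed.
Lemma bj'_brown a j j' b : bj' (brown a j j' b) = j'. Proof. by rewrite brownE. Qed.
Lemma bβ_brown a j j' b : bβ (brown a j j' b) = b. Proof. by rewrite brownE. Qed.

Lemma bαD x y : bα (x + y) = bα x + bα y. Proof. by []. Qed.
Lemma bαN x : bα (- x) = - bα x. Proof. by []. Qed.
Lemma bαZ c x : bα (c *: x) = c * bα x. Proof. by []. Qed.
Lemma bα0 : bα (0 : Brown k) = 0. Proof. by []. Qed.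

Lemma brown0 : 0 = brown 0 0 0 0 :> Brown k. Proof. by rewrite brownE. Qed.

Lemma brownD a1 j1 j1' b1 a2 j2 j2' b2 :
  brown a1 j1 j1' b1 + brown a2 j2 j2' b2 =
  brown (a1 + a2) (j1 + j2) (j1' + j2') (b1 + b2).
Proof. by rewrite !brownE. Qed.

Lemma brownN a j j' b : - brown a j j' b = brown (- a) (- j) (- j') (- b).
Proof. by rewrite !brownE. Qed.

Lemma brownZ c a j j' b : c *: brown a j j' b = brown (c * a) (c *: j) (c *: j') (c * b).
Proof. by rewrite !brownE. Qed.

Lemma brown_bar_brown a j j' b : brown_bar (brown a j j' b) = brown b j j' a.
Proof. by rewrite !brownE. Qed.

Lemma brown_bar0 : brown_bar 0 = 0 :> Brown k.
Proof. by rewrite brown0 brown_bar_brown. Qed.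

Lemma omega_brown a1 j1 j1' b1 a2 j2 j2' b2 :
  omega (brown a1 j1 j1' b1) (brown a2 j2 j2' b2) =
  a1 * b2 - a2 * b1 + alb_tr j1 j2' - alb_tr j1' j2.
Proof. by rewrite !brownE. Qed.

Lemma brown_mul_brown cr a1 j1 j1' b1 a2 j2 j2' b2 :
  brown_mul cr (brown a1 j1 j1' b1) (brown a2 j2 j2' b2) =
  brown (a1 * a2 + alb_tr j1 j2') (a1 *: j2 + b2 *: j1 + 2%:R *: cr j1' j2')
        (a2 *: j1' + b1 *: j2' + 2%:R *: cr j1 j2) (b1 * b2 + alb_tr j2 j1').
Proof. by rewrite !brownE. Qed.

Lemma omega0l y : omega 0 y = 0.
Proof. by rewrite [y]brown_eta brown0 omega_brown !alb_tr0l; ring. Qed.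

Lemma omega0r x : omega x 0 = 0.
Proof. by rewrite [x]brown_eta brown0 omega_brown !alb_tr0r; ring. Qed.

Lemma omegaDl x y z : omega (x + y) z = omega x z + omega y z.
Proof.
rewrite [x]brown_eta [y]brown_eta [z]brown_eta brownD !omega_brown !alb_trDl.
by ring.
Qed.

Lemma omegaDr x y z : omega x (y + z) = omega x y + omega x z.
Proof.
rewrite [x]brown_eta [y]brown_eta [z]brown_eta brownD !omega_brown !alb_trDr.
by ring.
Qed.

End BrownCoordinates.

Section TripleProduct.
Variable k : fieldType.
Variable cr : Alb k -> Alb k -> Alb k.
Hypothesis hcr : is_cross cr.
Implicit Types (a b c d e : k) (x y z : Brown k).

Ltac zero_simpl :=
  rewrite ?(scale0r, scaler0, scale1r, mul0r, mulr0, mul1r, mulr1, addr0, add0r,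
            subr0, sub0r, oppr0, alb_tr0l, alb_tr0r, cross0l hcr, cross0r hcr).

Lemma brown_mul0l y : brown_mul cr 0 y = 0.
Proof. by rewrite [y]brown_eta brown0 brown_mul_brown; zero_simpl. Qed.

Lemma brown_mul0r x : brown_mul cr x 0 = 0.
Proof. by rewrite [x]brown_eta brown0 brown_mul_brown; zero_simpl. Qed.

Lemma tprod0l y z : tprod cr 0 y z = 0.
Proof.
rewrite /tprod /brown_trip ?(brown_bar0, brown_mul0l, brown_mul0r, omega0l, omega0r).
by zero_simpl; rewrite ?subrr.
Qed.

Lemma tprod0m x z : tprod cr x 0 z = 0.
Proof.
rewrite /tprod /brown_trip ?(brown_bar0, brown_mul0l, brown_mul0r, omega0l, omega0r).
by zero_simpl; rewrite ?subrr.
Qed.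

Lemma tprod0r x y : tprod cr x y 0 = 0.
Proof.
rewrite /tprod /brown_trip ?(brown_bar0, brown_mul0l, brown_mul0r, omega0l, omega0r).
by zero_simpl; rewrite ?subrr.
Qed.

Lemma odot_pair0l p2 q x : odot_pair cr (0, p2) q x = 0.
Proof.
rewrite /odot_pair /jprod /Lop /fprime /= ?(tprod0l, tprod0r, omega0l).
by zero_simpl; rewrite ?subrr.
Qed.

Lemma odot_pair0r p q2 x : odot_pair cr p (0, q2) x = 0.
Proof.
rewrite /odot_pair /jprod /Lop /fprime /= ?(tprod0m, tprod0r, omega0r).
by zero_simpl; rewrite ?subrr.
Qed.

Definition wE a b c d : Brown k := brown a (b *: E11) (c *: E11) d.

Lemma bα_wE a b c d : bα (wE a b c d) = a. Proof. exact: bα_brown. Qed.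

Lemma wE0 : wE 0 0 0 0 = 0. Proof. by rewrite /wE !scale0r brown0. Qed.

Lemma wE_add a1 b1 c1 d1 a2 b2 c2 d2 :
  wE a1 b1 c1 d1 + wE a2 b2 c2 d2 = wE (a1 + a2) (b1 + b2) (c1 + c2) (d1 + d2).
Proof. by rewrite /wE brownD !scalerDl. Qed.

Lemma wE_opp a b c d : - wE a b c d = wE (- a) (- b) (- c) (- d).
Proof. by rewrite /wE brownN !scaleNr. Qed.

Lemma wE_scale e a b c d : e *: wE a b c d = wE (e * a) (e * b) (e * c) (e * d).
Proof. by rewrite /wE brownZ !scalerA. Qed.

Lemma wE_bar a b c d : brown_bar (wE a b c d) = wE d b c a.
Proof. by rewrite /wE brown_bar_brown. Qed.

Lemma omega_wE a1 b1 c1 d1 a2 b2 c2 d2 :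
  omega (wE a1 b1 c1 d1) (wE a2 b2 c2 d2) = a1 * d2 - a2 * d1 + b1 * c2 - c1 * b2.
Proof. by rewrite /wE omega_brown !alb_tr_E11. Qed.

Lemma brown_mul_wE a1 b1 c1 d1 a2 b2 c2 d2 :
  brown_mul cr (wE a1 b1 c1 d1) (wE a2 b2 c2 d2) =
  wE (a1 * a2 + b1 * c2) (a1 * b2 + d2 * b1) (a2 * c1 + d1 * c2) (d1 * d2 + b2 * c1).
Proof.
rewrite /wE brown_mul_brown !alb_tr_E11 !(cross_E11 hcr) !scaler0 !addr0 !scalerA.
by rewrite -!scalerDl; congr brown; ring.
Qed.

Lemma s0_wE : s0 k = wE 1 0 0 (-1).
Proof. by rewrite /wE !scale0r brownE. Qed.

Lemma tprod_wE a1 a2 a3 a4 b1 b2 b3 b4 c1 c2 c3 c4 :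
  tprod cr (wE a1 a2 a3 a4) (wE b1 b2 b3 b4) (wE c1 c2 c3 c4) =
  wE (- 2%:R * a1 * b1 * c4 + a1 * b2 * c3 + a1 * b3 * c2 - 2%:R * a1 * b4 * c1
      + a2 * b1 * c3 + a2 * b3 * c1 + a3 * b1 * c2 + a3 * b2 * c1 - 2%:R * a4 * b1 * c1)
     (a1 * b2 * c4 + a1 * b4 * c2 + a2 * b1 * c4 - 2%:R * a2 * b2 * c3
      - 2%:R * a2 * b3 * c2 + a2 * b4 * c1 - 2%:R * a3 * b2 * c2 + a4 * b1 * c2
      + a4 * b2 * c1)
     (- a1 * b3 * c4 - a1 * b4 * c3 + 2%:R * a2 * b3 * c3 - a3 * b1 * c4
      + 2%:R * a3 * b2 * c3 + 2%:R * a3 * b3 * c2 - a3 * b4 * c1 - a4 * b1 * c3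
      - a4 * b3 * c1)
     (2%:R * a1 * b4 * c4 - a2 * b3 * c4 - a2 * b4 * c3 - a3 * b2 * c4 - a3 * b4 * c2
      + 2%:R * a4 * b1 * c4 - a4 * b2 * c3 - a4 * b3 * c2 + 2%:R * a4 * b4 * c1).
Proof.
rewrite /tprod /brown_trip s0_wE.
rewrite !(brown_mul_wE, wE_bar, wE_add, wE_opp, wE_scale, omega_wE).
by congr wE; ring.
Qed.

Ltac brown_expand x :=
  rewrite /tprod /brown_trip /s0 /wE -!brownE [x]brown_eta;
  move: (bα x) (bj x) (bj' x) (bβ x) => α j j' β;
  rewrite !(brownD, brownN, brownZ, brown_bar_brown, brown_mul_brown, omega_brown);
  rewrite ?(bα_brown, bj_brown, bj'_brown, bβ_brown); zero_simpl.

Ltac alb_entries := rewrite /alb_tr /E11 /= ?mxtrace3 ?mulmx3E /= ?mxE /=; ring.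

Ltac brown_coords :=
  try congr brown; first [ring | alb_entries | apply: alb_matrixP => i l; alb_entries].

Lemma tprod_e4e4 x : tprod cr (wE 0 0 0 1) (wE 0 0 0 1) x = wE 0 0 0 (2%:R * bα x).
Proof. by brown_expand x; brown_coords. Qed.

Lemma bα_tprod_e2e3 x : bα (tprod cr (wE 0 1 0 0) (wE 0 0 1 0) x) = bα x.
Proof. by brown_expand x; brown_coords. Qed.

Lemma tprod_e2e4 x :
  tprod cr (wE 0 1 0 0) (wE 0 0 0 1) x = wE 0 (bα x) 0 (- (bj' x).1.1 i0 i0).
Proof. by brown_expand x; brown_coords. Qed.

Lemma bα_tprod_e4e3 x : bα (tprod cr (wE 0 0 0 1) (wE 0 0 1 0) x) = 0.
Proof. by brown_expand x; brown_coords. Qed.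

Lemma bj'_tprod_e4e3 x :
  (bj' (tprod cr (wE 0 0 0 1) (wE 0 0 1 0) x)).1.1 i0 i0 = - bα x.
Proof. by brown_expand x; brown_coords. Qed.

End TripleProduct.
Arguments wE {k}.

Section Symplectic.
Variable k : fieldType.
Implicit Types (x y z : Brown k) (F : Brown k -> Brown k).

Section LinearMap.
Variable F : Brown k -> Brown k.
Hypothesis linF : is_linW F.

Lemma linW0 : F 0 = 0.
Proof. by apply: (addrI (F 0)); rewrite addr0 -{1}(scale1r (F 0)) -linF scale1r addr0. Qed.

Lemma linWD x y : F (x + y) = F x + F y.
Proof. by have := linF 1 x y; rewrite !scale1r. Qed.

Lemma linWZ c x : F (c *: x) = c *: F x.
Proof. by have := linF c x 0; rewrite !addr0 linW0 addr0. Qed.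

Lemma linWN x : F (- x) = - F x.
Proof. by rewrite -scaleN1r linWZ scaleN1r. Qed.

End LinearMap.

Lemma wsum_Dact F w x : is_sp F -> wsum (Dact F w) x = F (wsum w x) - wsum w (F x).
Proof.
case=> linF skewF; rewrite /wsum /Dact big_cat !big_map /=.
rewrite (big_morph F (linWD linF) (linW0 linF)) -sumrB -big_split /=.
apply: eq_bigr => p _; rewrite /wedge (linWD linF) (linWN linF) !(linWZ linF).
have skew_l y : omega (F y) x = - omega y (F x) by apply/eqP; rewrite -addr_eq0 skewF.
rewrite !skew_l !scaleNr opprK opprB [- _ - _]addrC addrACA.
by congr (_ + _); rewrite addrC.
Qed.

Lemma wsum_gact F w x : is_Sp F -> wsum (gact F w) (F x) = F (wsum w x).
Proof.
case=> linF [_ omegaF]; rewrite /wsum /gact big_map.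
rewrite (big_morph F (linWD linF) (linW0 linF)).
by apply: eq_bigr => p _; rewrite /wedge !omegaF (linWD linF) (linWN linF) !(linWZ linF).
Qed.

Lemma is_Sp_add_nil F :
  is_sp F -> (forall x, F (F x) = 0) -> is_Sp (fun x => x + F x).
Proof.
case=> linF skewF nilF; split; [|split].
- by move=> c x y; rewrite linF scalerDr addrACA.
- exists (fun x => x - F x) => x.
    by rewrite (linWD linF) nilF addr0 addrK.
  by rewrite (linWD linF) (linWN linF) nilF oppr0 addr0 subrK.
- move=> x y; rewrite !omegaDl !omegaDr.
  have skew_l z : omega (F x) z = - omega x (F z) by apply/eqP; rewrite -addr_eq0 skewF.
  by rewrite !skew_l nilF omega0r oppr0 addr0 addrK.
Qed.

End Symplectic.

Section Counterexample.
Variable k : fieldType.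
Variable cr : Alb k -> Alb k -> Alb k.
Hypothesis hcr : is_cross cr.
Hypotheses (two_neq0 : (2%:R : k) != 0) (seven_neq0 : (7%:R : k) != 0).
Implicit Types (a b c d : k) (x y : Brown k).

Definition nilβα x : Brown k := wE (bβ x) 0 0 0.

Definition transβα x : Brown k := x + nilβα x.

Lemma nilβα_wE a b c d : nilβα (wE a b c d) = wE d 0 0 0.
Proof. by rewrite /nilβα /wE bβ_brown. Qed.

Lemma nilβα_sp : is_sp nilβα.
Proof.
split=> [c x y | x y]; rewrite /nilβα.
  have -> : bβ (c *: x + y) = c * bβ x + bβ y by [].
  by rewrite wE_scale wE_add; congr wE; ring.
rewrite [x]brown_eta [y]brown_eta !bβ_brown /wE !omega_brown !scale0r.
by rewrite !alb_tr0l !alb_tr0r; ring.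
Qed.

Lemma nilβα_nil x : nilβα (nilβα x) = 0.
Proof. by rewrite {2}/nilβα nilβα_wE wE0. Qed.

Lemma transβα_Sp : is_Sp transβα.
Proof. exact: is_Sp_add_nil nilβα_sp nilβα_nil. Qed.

Lemma transβα_e1 : transβα (wE 1 0 0 0) = wE 1 0 0 0.
Proof. by rewrite /transβα nilβα_wE wE0 addr0. Qed.

Definition u0 : seq (Brown k * Brown k) := [:: (wE 0 1 0 0, wE 0 0 0 1)].
Definition v0 : seq (Brown k * Brown k) := [:: (wE 0 0 1 0, wE 0 0 0 1)].

Lemma u0_sigma : in_sigma u0.
Proof. by rewrite /in_sigma big_seq1 omega_wE; ring. Qed.

Lemma v0_sigma : in_sigma v0.
Proof. by rewrite /in_sigma big_seq1 omega_wE; ring. Qed.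

Lemma odot2_u0v0 x : odot2 cr u0 v0 x = 0.
Proof.
rewrite /odot2 !big_seq1 /odot_pair /jprod /Lop /fprime /=.
rewrite !(tprod_e4e4 hcr) (bα_tprod_e2e3 hcr) !(tprod_e2e4 hcr) (bα_tprod_e4e3 hcr).
rewrite (bj'_tprod_e4e3 hcr) !(tprod_wE hcr) !omega_wE.
rewrite [X in X *: x](_ : _ = 0) ?scale0r ?addr0; last by ring.
by rewrite !(wE_add, wE_opp, wE_scale) -wE0; congr wE; ring.
Qed.

Lemma twenty_eight_neq0 : (28%:R : k) != 0.
Proof. by rewrite (_ : 28 = 2 * 2 * 7)%N // !natrM !mulf_neq0. Qed.

Lemma bα_odot2_Dact :
  bα (odot2 cr (Dact nilβα u0) v0 (wE 1 0 0 0) + odot2 cr u0 (Dact nilβα v0) (wE 1 0 0 0))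
  = - 4%:R.
Proof.
rewrite /odot2 /Dact /u0 /v0 /= !nilβα_wE wE0 !big_cons !big_nil !addr0.
rewrite !(odot_pair0l hcr) !(odot_pair0r hcr) !add0r.
rewrite /odot_pair /jprod /Lop /fprime /= !(tprod_wE hcr) !omega_wE.
rewrite !(bαD, bαN, bαZ, bα_wE).
by field; rewrite twenty_eight_neq0 two_neq0.
Qed.

Lemma bα_odot2_gact :
  bα (odot2 cr (gact transβα u0) (gact transβα v0) (wE 1 0 0 0)) = - 4%:R.
Proof.
rewrite /odot2 /gact /u0 /v0 /transβα /= !nilβα_wE !wE_add !big_seq1.
rewrite /odot_pair /jprod /Lop /fprime /= !(tprod_wE hcr) !omega_wE.
rewrite !(bαD, bαN, bαZ, bα_wE).
by field; rewrite twenty_eight_neq0 two_neq0.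
Qed.

Lemma four_neq0 : (4%:R : k) != 0.
Proof. by rewrite (natrM k 2 2) mulf_neq0. Qed.

Lemma Dact_odot2_u0v0 w : wsum w =1 odot2 cr u0 v0 ->
  ~ (wsum (Dact nilβα w) =1
       (fun y => odot2 cr (Dact nilβα u0) v0 y + odot2 cr u0 (Dact nilβα v0) y)).
Proof.
move=> w_u0v0 /(_ (wE 1 0 0 0)) /(congr1 (@bα k)).
rewrite wsum_Dact; last exact: nilβα_sp.
rewrite !w_u0v0 !odot2_u0v0 (linW0 nilβα_sp.1) subr0.
by rewrite bα0 bα_odot2_Dact => /eqP; rewrite eq_sym oppr_eq0 (negbTE four_neq0).
Qed.

Lemma gact_odot2_u0v0 w : wsum w =1 odot2 cr u0 v0 ->
  ~ (wsum (gact transβα w) =1 odot2 cr (gact transβα u0) (gact transβα v0)).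
Proof.
move=> w_u0v0 /(_ (wE 1 0 0 0)) /(congr1 (@bα k)).
rewrite -{1}transβα_e1 wsum_gact; last exact: transβα_Sp.
rewrite w_u0v0 odot2_u0v0 (linW0 transβα_Sp.1).
by rewrite bα0 bα_odot2_gact => /eqP; rewrite eq_sym oppr_eq0 (negbTE four_neq0).
Qed.

End Counterexample.

Theorem proposition4p1 (k : closedFieldType)
    (hchar : forall p : nat, p \in [pchar k] -> (19 < p)%N)
    (cr : Alb k -> Alb k -> Alb k) (hcr : is_cross cr) :
  (exists (D : Brown k -> Brown k) (u v : seq (Brown k * Brown k)),
     [/\ is_sp D, in_sigma u, in_sigma v,
         exists w, wsum w =1 odot2 cr u v &
         forall w, wsum w =1 odot2 cr u v ->
           ~ (wsum (Dact D w) =1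
                (fun a => odot2 cr (Dact D u) v a + odot2 cr u (Dact D v) a))])
  /\
  (exists (g : Brown k -> Brown k) (u v : seq (Brown k * Brown k)),
     [/\ is_Sp g, in_sigma u, in_sigma v,
         exists w, wsum w =1 odot2 cr u v &
         forall w, wsum w =1 odot2 cr u v ->
           ~ (wsum (gact g w) =1 odot2 cr (gact g u) (gact g v))]).
Proof.
have small_prime_neq0 p : prime p -> (p <= 19)%N -> (p%:R : k) != 0.
  move=> p_prime p_small; apply/negP => /eqP p0.
  have /hchar : p \in [pchar k] by rewrite inE p_prime p0 eqxx.
  by rewrite ltnNge p_small.
have two_neq0 := small_prime_neq0 2 isT isT.
have seven_neq0 := small_prime_neq0 7 isT isT.
have rep0 : exists w, wsum w =1 odot2 cr (u0 k) (v0 k).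
  by exists [::] => a; rewrite (odot2_u0v0 hcr) /wsum big_nil.
split.
- exists (@nilβα k), (u0 k), (v0 k); split; [exact: nilβα_sp | exact: u0_sigma |
    exact: v0_sigma | exact: rep0 | exact: Dact_odot2_u0v0 hcr two_neq0 seven_neq0].
- exists (@transβα k), (u0 k), (v0 k); split; [exact: transβα_Sp | exact: u0_sigma |
    exact: v0_sigma | exact: rep0 | exact: gact_odot2_u0v0 hcr two_neq0 seven_neq0].
Qed.
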